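(* Let $r,k\in\mathbb Z$ with $0\le k\le r$ and suppose Assumption (A1) holds. Then for every $\hat v\in C^{k_{\mathcal J}+1}([-1,1])$ the conditions (J1)–(J3) below determine a unique polynomial $\widehat{\mathcal J}\hat v\in P_r([-1,1])$, i.e. $\widehat{\mathcal J}$ is well defined. Moreover, if $\widehat{\mathcal I}$ preserves polynomials up to degree $\tilde r$ (i.e. $\widehat{\mathcal I}p=p$ for all $p\in P_{\tilde r}([-1,1])$), then $\widehat{\mathcal J}$ preserves polynomials up to degree $\min\{\tilde r+1,r\}$.
   Context: $P_s(J)$ denotes polynomials of degree at most $s$ on $J$; $\delta_{i,j}$ is the Kronecker symbol; $\lfloor\cdot\rfloor$ is the floor function (so $\lfloor (k-1)/2\rfloor=-1$ for $k=0$); sums with upper limit below the lower limit are empty. $\widehat{\mathscr I}$ is a linear functional (the reference integrator) and $\widehat{\mathcal I}$ a linear operator (the reference approximation operator); $k_{\mathscr I}\ge0$ and $k_{\mathcal I}\ge0$ are the smallest integers such that $\widehat{\mathscr I}$ is well defined on $C^{k_{\mathscr I}}([-1,1])$ and $\widehat{\mathcal I}$ is well defined on $C^{k_{\mathcal I}}([-1,1])$; moreover $\widehat{\mathcal I}\hat v\in C^{l}([-1,1])$ whenever $\hat v\in C^{\max\{k_{\mathcal I},l\}}([-1,1])$. Set $k_{\mathcal J}:=\max\{\lfloor k/2\rfloor-1,k_{\mathscr I},k_{\mathcal I}\}$. Assumption (A1): whenever $\hat\psi\in P_{r-\max\{1,k\}}([-1,1])$ satisfies $\widehat{\mathscr I}\big[(1-\hat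 t)^{\lfloor k/2\rfloor}(1+\hat t)^{|\lfloor (k-1)/2\rfloor|}\hat\psi\,\hat\varphi\big]=0$ for all $\hat\varphi\in P_{r-\max\{1,k\}}([-1,1])$, then $\hat\psi\equiv0$. Definition of $\widehat{\mathcal J}\hat v\in P_r([-1,1])$: (J1) if $k\ge1$: $(\widehat{\mathcal J}\hat v)^{(i)}(-1)=\hat v^{(i)}(-1)$ for $i=0,\dots,\lfloor (k-1)/2\rfloor$; (J2) if $k\ge2$: $(\widehat{\mathcal J}\hat v)^{(i)}(1)=\hat v^{(i)}(1)$ for $i=1,\dots,\lfloor k/2\rfloor$; (J3) $\widehat{\mathscr I}[(\widehat{\mathcal J}\hat v)'\hat\varphi]+\delta_{0,k}(\widehat{\mathcal J}\hat v)(-1)\hat\varphi(-1)=\widehat{\mathscr I}[(\widehat{\mathcal I}(\hat v'))\hat\varphi]+\delta_{0,k}\hat v(-1)\hat\varphi(-1)$ for all $\hat\varphi\in P_{r-k}([-1,1])$. *)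

From HB Require Import structures.
From mathcomp Require Import all_boot all_order all_algebra.
From mathcomp Require Import all_classical all_reals all_analysis.
Import numFieldNormedType.Exports.
Set Implicit Arguments. Unset Strict Implicit. Unset Printing Implicit Defensive.
Import Order.TTheory GRing.Theory Num.Theory.
Local Open Scope ring_scope.

Section Defs.
Variable R : realType.

(* P_s([-1,1]) for s : int ; P_s = {0} when s < 0. *)
Definition inP (s : int) (q : {poly R}) : Prop := ((size q)%:Z <= s + 1)%R.

(* C^k([-1,1]), identified (Whitney/Seeley extension) with restrictions of
   functions that are k times continuously differentiable on R. *)
Definition Ck (k : nat) (f : R -> R) : Prop :=
  (forall n, (n < k)%N -> forall x : R, derivable (derive1n n f) x 1)
  /\ (forall x : R, {for x, continuous (derive1n k f : R -> R)}).

Definition onI (x : R) : Prop := -1 <= x <= 1.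

Definition fl_k2 (k : nat) : nat := (k %/ 2)%N.
Definition fl_km1_2 (k : nat) : int := ((k%:Z - 1) %/ 2)%Z.

(* k_J = max{floor(k/2) - 1, k_scriptI, k_calI} (nat truncation of
   floor(k/2)-1 is harmless since the other two are >= 0) *)
Definition kJ (k kI kcI : nat) : nat := maxn (fl_k2 k - 1) (maxn kI kcI).

Definition integrator_ok (kI : nat) (Iint : (R -> R) -> R) : Prop :=
  (forall f g (a : R), Ck kI f -> Ck kI g ->
      Iint (fun t => f t + a * g t) = Iint f + a * Iint g)
  /\ (forall f g, (forall x, onI x -> f x = g x) -> Iint f = Iint g).

Definition approx_ok (kcI : nat) (Iop : (R -> R) -> (R -> R)) : Prop :=
  (forall f g (a : R), Ck kcI f -> Ck kcI g -> forall x, onI x ->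
      Iop (fun t => f t + a * g t) x = Iop f x + a * Iop g x)
  /\ (forall f g, (forall x, onI x -> f x = g x) ->
        forall x, onI x -> Iop f x = Iop g x)
  /\ (forall (l : nat) f, Ck (maxn kcI l) f -> Ck l (Iop f)).

Definition A1 (r k : nat) (Iint : (R -> R) -> R) : Prop :=
  forall psi : {poly R}, inP (r%:Z - (maxn 1 k)%:Z) psi ->
   (forall phi : {poly R}, inP (r%:Z - (maxn 1 k)%:Z) phi ->
      Iint (fun t => (1 - t) ^+ fl_k2 k * (1 + t) ^+ `|fl_km1_2 k|%N
                     * psi.[t] * phi.[t]) = 0) ->
   psi = 0.

(* q satisfies (J1)-(J3) for v, and q in P_r: "q = Jhat v". *)
Definition IsJ (r k : nat) (Iint : (R -> R) -> R) (Iop : (R -> R) -> (R -> R))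
    (v : R -> R) (q : {poly R}) : Prop :=
  inP r%:Z q
  /\ ((1 <= k)%N -> forall i : nat, (i%:Z <= fl_km1_2 k)%R ->
        (derivn i q).[-1] = derive1n i v (-1))
  /\ ((2 <= k)%N -> forall i : nat, (1 <= i)%N -> (i <= fl_k2 k)%N ->
        (derivn i q).[1] = derive1n i v 1)
  /\ (forall phi : {poly R}, inP (r%:Z - k%:Z) phi ->
        Iint (fun t => (deriv q).[t] * phi.[t])
          + (k == 0%N)%:R * q.[-1] * phi.[-1]
        = Iint (fun t => Iop (derive1 v) t * phi.[t])
          + (k == 0%N)%:R * v (-1) * phi.[-1]).

End Defs.

From HB Require Import structures.
From mathcomp Require Import all_boot all_order all_algebra.
From mathcomp Require Import ring lra zify.
From mathcomp Require Import all_classical all_reals all_analysis.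
From mathcomp Require Import polyorder.
Import Order.TTheory GRing.Theory Num.Theory numFieldNormedType.Exports.

Set Implicit Arguments.
Unset Strict Implicit.
Unset Printing Implicit Defensive.

Local Open Scope ring_scope.

(* (J1)-(J3) is a square linear system for the r + 1 coefficients of Jv:
   ceil(k/2) conditions at -1, floor(k/2) at 1, and (J3) tested on a basis of
   P_{r-k}.  So existence follows from uniqueness.  Let d solve the homogeneous
   system.  For k > 0, d' vanishes to order floor((k-1)/2) at -1 and floor(k/2)
   at 1, hence d' = (1-t)^floor(k/2) (1+t)^floor((k-1)/2) psi with psi in
   P_{r-k}, and the homogeneous (J3) is exactly the hypothesis of (A1): psi = 0.
   For k = 0 the same argument applies to psi = d', testing (J3) with
   (1+t) phi so that the boundary term drops out.  Thus d is constant, and (J1),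
   or (J3) with phi = 1 when k = 0, makes it vanish.  If I reproduces P_rt, every
   p in P_{min(rt+1, r)} satisfies (J1)-(J3) for v = p, so Jp = p by
   uniqueness. *)

Section Ck_closure.
Variable R : realType.
Implicit Types (f g : R -> R) (k : nat).

Lemma CkS k f : Ck k.+1 f <-> (forall x, derivable f x 1) /\ Ck k (derive1 f).
Proof.
split=> [[df cf]|[df1 [df cf]]].
- split=> [x|]; first exact: (df 0%N).
  split=> [n nk x|x]; rewrite -derive1Sn; [exact: df | exact: cf].
- split=> [[|n] nk x|x]; rewrite ?derive1Sn; [exact: df1 | exact: df | exact: cf].
Qed.

Lemma Ck_le m k f : (m <= k)%N -> Ck k f -> Ck m f.
Proof.
move=> mk [df cf]; split=> [n nm|x]; first exact/df/(leq_trans nm).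
have [->|neq_mk] := eqVneq m k; first exact: cf.
apply/differentiable_continuous/derivable1_diffP/df.
by rewrite ltn_neqAle neq_mk.
Qed.

Lemma Ck_horner k (p : {poly R}) : Ck k (horner p).
Proof.
elim: k p => [|k IH] p; first by split=> // x; rewrite derive1n0; exact: continuous_horner.
by apply/CkS; split=> [x|]; [exact: derivable_horner | rewrite -derivE].
Qed.

Lemma CkD k f g : Ck k f -> Ck k g -> Ck k (fun t => f t + g t).
Proof.
elim: k f g => [|k IH] f g.
  move=> [_ cf] [_ cg]; split=> // x; rewrite derive1n0.
  by apply: continuousD; [have := cf x | have := cg x]; rewrite derive1n0.
move=> /CkS[df Cf] /CkS[dg Cg]; apply/CkS; split=> [x|].
  exact: derivableD (df x) (dg x).
have -> : derive1 (fun t => f t + g t) = (fun t => derive1 f t + derive1 g t).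
  by apply/funext => x; rewrite !derive1E deriveD.
exact: IH.
Qed.

Lemma CkM k f g : Ck k f -> Ck k g -> Ck k (fun t => f t * g t).
Proof.
elim: k f g => [|k IH] f g.
  move=> [_ cf] [_ cg]; split=> // x; rewrite derive1n0.
  by apply: continuousM; [have := cf x | have := cg x]; rewrite derive1n0.
move=> Cf Cg; have /CkS[df Cf'] := Cf; have /CkS[dg Cg'] := Cg.
apply/CkS; split=> [x|]; first exact: derivableM (df x) (dg x).
have -> : derive1 (fun t => f t * g t) =
          (fun t => f t * derive1 g t + derive1 f t * g t).
  by apply/funext => x; rewrite !derive1E deriveM //= [g x *: _]mulrC.
by apply: CkD; apply: IH => //; apply: Ck_le Cf || apply: Ck_le Cg.
Qed.

Lemma derive1n_horner n (p : {poly R}) : derive1n n (horner p) = horner p^`(n).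
Proof.
elim: n => [|n IH]; first by rewrite derive1n0 derivn0.
by rewrite derive1nS IH -derivE derivnS.
Qed.

End Ck_closure.

Section vanishing_derivatives.
Variable R : numFieldType.
Implicit Types p q : {poly R}.

Lemma derivnS_mulXsubC i q c :
  (q * ('X - c%:P))^`(i.+1) = q^`(i.+1) * ('X - c%:P) + q^`(i) *+ i.+1.
Proof.
elim: i => [|i IH]; first by rewrite derivn1 derivn0 derivM derivXsubC mulr1 mulr1n.
rewrite derivnS IH derivD derivM derivXsubC mulr1 derivMn -!derivnS.
by rewrite -addrA -mulrS.
Qed.

Lemma expXsubC_dvdp m p c :
  (forall i, (i < m)%N -> (p^`(i)).[c] = 0) -> ('X - c%:P) ^+ m %| p.
Proof.
elim: m p => [|m IH] p p_c; first by rewrite expr0 dvd1p.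
have /factor_theorem[q p_eq] : root p c by apply/eqP; rewrite -[p]derivn0 p_c.
rewrite p_eq in p_c *; rewrite exprSr; apply: dvdp_mul => //; apply: IH => i lt_im.
have := p_c i.+1 lt_im; rewrite derivnS_mulXsubC hornerD hornerM hornerMn.
by rewrite hornerXsubC subrr mulr0 add0r => /eqP; rewrite mulrn_eq0 => /eqP.
Qed.

Lemma exp_1subX n : (1 - 'X) ^+ n = (-1) ^+ n *: ('X - 1%:P) ^+ n :> {poly R}.
Proof. by rewrite -exprZn scaleN1r polyC1 opprB. Qed.

Lemma addX1E : 1 + 'X = 'X - (-1)%:P :> {poly R}.
Proof. by rewrite polyCN polyC1 opprK addrC. Qed.

Lemma size_weight a b : size ((1 - 'X) ^+ a * (1 + 'X) ^+ b : {poly R}) = (a + b).+1.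
Proof.
rewrite exp_1subX addX1E -scalerAl size_scale ?signr_eq0 //.
by rewrite size_mul -?size_poly_eq0 !size_exp_XsubC // addnS.
Qed.

Lemma horner_weight a b (t : R) :
  ((1 - 'X) ^+ a * (1 + 'X) ^+ b : {poly R}).[t] = (1 - t) ^+ a * (1 + t) ^+ b.
Proof. by rewrite hornerM !horner_exp !hornerE. Qed.

Lemma weight_dvdp a b p :
  (forall i, (i < a)%N -> (p^`(i)).[1] = 0) ->
  (forall i, (i < b)%N -> (p^`(i)).[-1] = 0) ->
  (1 - 'X) ^+ a * (1 + 'X) ^+ b %| p.
Proof.
move=> /expXsubC_dvdp dvd1 /expXsubC_dvdp dvdN1.
rewrite exp_1subX addX1E -scalerAl dvdpZl ?signr_eq0 // Gauss_dvdp ?dvd1 ?dvdN1 //.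
apply/coprimep_expl/coprimep_expr; rewrite coprimep_XsubC rootE hornerXsubC.
by rewrite -opprD oppr_eq0 lt0r_neq0 // addr_gt0 ?ltr01.
Qed.

End vanishing_derivatives.

Lemma scalar_lincomb (R : pzRingType) (U : lmodType R) (f : U -> R) n
    (c : 'I_n -> R) (u : 'I_n -> U) :
  scalar f -> f (\sum_(i < n) c i *: u i) = \sum_(i < n) c i * f (u i).
Proof.
move=> f_scalar.
(* Packing [f] as a [{scalar U}] gives access to [linear_sum]. *)
pose g : {scalar U} := HB.pack f (GRing.isLinear.Build R U R *%R f f_scalar).
rewrite -[f]/(g : U -> R) linear_sum; apply: eq_bigr => i _; exact: scalarZ.
Qed.

Lemma scalar_eq_on_monomials (R : nzRingType) n (f g : {poly R} -> R) :
  scalar f -> scalar g -> (forall j, (j < n)%N -> f 'X^j = g 'X^j) ->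
  forall p : {poly R}, (size p <= n)%N -> f p = g p.
Proof.
move=> f_scalar g_scalar fg p le_pn; rewrite -(take_poly_id le_pn) /take_poly poly_def.
by rewrite !scalar_lincomb //; apply: eq_bigr => j _; rewrite fg.
Qed.

Lemma scalar_system_solvable (R : fieldType) n (l : nat -> {poly R} -> R) :
  (forall m, scalar (l m)) ->
  (forall q : {poly R}, (size q <= n)%N -> (forall m, (m < n)%N -> l m q = 0) -> q = 0) ->
  forall t : nat -> R,
    exists2 q : {poly R}, (size q <= n)%N & forall m, (m < n)%N -> l m q = t m.
Proof.
move=> l_scalar l_inj t.
pose M : 'M[R]_n := \matrix_(j, i) l i 'X^j.
have mulmxM c (i : 'I_n) : (c *m M) 0 i = l i (rVpoly c).
  rewrite mxE /rVpoly poly_def scalar_lincomb //.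
  by apply: eq_bigr => j _; rewrite mxE valK.
have M_unit : M \in unitmx.
  rewrite -row_free_unit; apply: inj_row_free => c cM0.
  have c0 : rVpoly c = 0.
    apply: l_inj => [|m lt_mn]; first exact: size_poly.
    by rewrite -(mulmxM c (Ordinal lt_mn)) cM0 mxE.
  by apply/rowP => j; rewrite -coef_rVpoly_ord c0 coef0 mxE.
exists (rVpoly (\row_i t i *m invmx M)) => [|m lt_mn]; first exact: size_poly.
by rewrite -(mulmxM _ (Ordinal lt_mn)) mulmxKV // mxE.
Qed.

Lemma inPB (R : realType) s (p q : {poly R}) : inP s p -> inP s q -> inP s (p - q).
Proof.
rewrite /inP; have := size_polyD p (- q); rewrite size_polyN.
by move: (size _) (size p) (size q) => n np nq; lia.
Qed.

Definition Jform {R : realType} (k : nat) (Iint : (R -> R) -> R)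
    (q phi : {poly R}) : R :=
  Iint (fun t => q^`().[t] * phi.[t]) + (k == 0%N)%:R * q.[-1] * phi.[-1].

(* (J1)-(J3) with arbitrary right-hand sides; [IsJ r k Iint Iop v q] unfolds to
   [inP r q] together with an instance of [Jconds]. *)
Definition Jconds {R : realType} (r k : nat) (Iint : (R -> R) -> R)
    (a1 a2 : nat -> R) (F : {poly R} -> R) (q : {poly R}) : Prop :=
  ((1 <= k)%N -> forall i : nat, (i%:Z <= fl_km1_2 k)%R -> (q^`(i)).[-1] = a1 i)
  /\ ((2 <= k)%N -> forall i : nat, (1 <= i)%N -> (i <= fl_k2 k)%N ->
        (q^`(i)).[1] = a2 i)
  /\ (forall phi : {poly R}, inP (r%:Z - k%:Z) phi -> Jform k Iint q phi = F phi).

(* The m-th of the r + 1 scalar equations: the ceil(k/2) conditions at -1, then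
   the floor(k/2) conditions at 1, then (J3) tested on 'X^(m - k). *)
Definition Jsel {R : realType} (k : nat) (a1 a2 : nat -> R) (F : {poly R} -> R)
    (m : nat) : R :=
  if (m < k.+1 %/ 2)%N then a1 m
  else if (m < k)%N then a2 (m - k.+1 %/ 2).+1 else F 'X^(m - k).

Section Jsystem.
Variables (R : realType) (r k kI : nat) (Iint : (R -> R) -> R).
Hypotheses (le_kr : (k <= r)%N) (Iint_ok : integrator_ok kI Iint).

Local Notation Jhom := (Jconds r k Iint (fun=> 0) (fun=> 0) (fun=> 0)).

Lemma Iint_tested_scalar (h : R -> R) (c : R) : Ck kI h ->
  scalar (fun phi : {poly R} => Iint (fun t => h t * phi.[t]) + c * phi.[-1]).
Proof.
move=> Ch a u v /=.
have -> : (fun t => h t * (a *: u + v).[t]) =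
          (fun t => h t * v.[t] + a * (h t * u.[t])).
  by apply/funext => t; rewrite hornerD hornerZ; ring.
rewrite Iint_ok.1 ?hornerD ?hornerZ; first ring.
  exact: CkM Ch (Ck_horner _ v).
exact: CkM Ch (Ck_horner _ u).
Qed.

Lemma Jform_scalar q : scalar (Jform k Iint q).
Proof. exact/Iint_tested_scalar/Ck_horner. Qed.

Lemma Jform_scalar_l phi : scalar (fun q => Jform k Iint q phi).
Proof.
move=> a u v; rewrite /Jform.
have -> : (fun t => (a *: u + v)^`().[t] * phi.[t]) =
          (fun t => v^`().[t] * phi.[t] + a * (u^`().[t] * phi.[t])).
  by apply/funext => t; rewrite derivD derivZ hornerD hornerZ; ring.
rewrite Iint_ok.1 ?hornerD ?hornerZ; first ring.
  exact: CkM (Ck_horner _ v^`()) (Ck_horner _ phi).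
exact: CkM (Ck_horner _ u^`()) (Ck_horner _ phi).
Qed.

Lemma Iint_eq0 (f : R -> R) : Ck kI f -> (forall t, f t = 0) -> Iint f = 0.
Proof.
move=> Cf f0; have := Iint_ok.1 f f 1 Cf Cf.
have -> : (fun t => f t + 1 * f t) = f by apply/funext => t; rewrite f0 mul1r addr0.
by lra.
Qed.

Lemma Jconds_sub a1 a2 F q1 q2 :
  Jconds r k Iint a1 a2 F q1 -> Jconds r k Iint a1 a2 F q2 -> Jhom (q1 - q2).
Proof.
move=> [J1q1 [J2q1 J3q1]] [J1q2 [J2q2 J3q2]]; split; [|split].
- by move=> k1 i ik; rewrite derivnB hornerD hornerN J1q1 ?J1q2 ?subrr.
- by move=> k2 i i1 ik; rewrite derivnB hornerD hornerN J2q1 ?J2q2 ?subrr.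
- move=> phi phi_r; rewrite -scaleN1r addrC (Jform_scalar_l phi).
  by rewrite J3q1 ?J3q2 // mulN1r addrC subrr.
Qed.

Hypothesis A1rk : A1 r k Iint.

Lemma Jhom_deriv_eq0_k0 d : k = 0%N -> inP r%:Z d -> Jhom d -> d^`() = 0.
Proof.
move=> k0 d_r [_ [_ J3]]; move: A1rk J3; rewrite k0 => A1r J3.
apply: A1r => [|phi phi_r].
  by move: d_r; rewrite /inP size_deriv; move: (size d) => s; lia.
rewrite -[RHS](J3 ((1 + 'X) * phi)); last first.
  move: phi_r; rewrite /inP; have := size_polyMleq (1 + 'X) phi.
  by rewrite addX1E size_XsubC; move: (size _) (size phi) => s1 s2; lia.
rewrite /Jform hornerM addX1E hornerXsubC subrr mul0r mulr0 addr0.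
by apply: (congr1 Iint); apply/funext => t; rewrite !hornerE /fl_k2 /=; ring.
Qed.

Lemma Jhom_deriv_eq0_gt0 d : (0 < k)%N -> inP r%:Z d -> Jhom d -> d^`() = 0.
Proof.
move=> k_gt0 d_r [J1 [J2 J3]].
set a := fl_k2 k; set b := (k.-1 %/ 2)%N.
set W : {poly R} := (1 - 'X) ^+ a * (1 + 'X) ^+ b.
have km1_b : fl_km1_2 k = b%:Z by rewrite /fl_km1_2 /b; lia.
have size_W : size W = k by rewrite size_weight /a /b /fl_k2; lia.
have W_neq0 : W != 0 by rewrite -size_poly_eq0 size_W -lt0n.
have W_dvd : W %| d^`().
  apply: weight_dvdp => i lt_i; rewrite -derivSn.
    by apply: J2; move: lt_i; rewrite /a /fl_k2; lia.
  by apply: J1; rewrite ?km1_b; lia.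
have d'_eq : d^`() = d^`() %/ W * W by rewrite divpK.
set psi := d^`() %/ W in d'_eq.
suff psi0 : psi = 0 by rewrite d'_eq psi0 mul0r.
apply: A1rk => [|phi phi_r].
  have [-> | psi_neq0] := eqVneq psi 0; first by rewrite /inP size_poly0; lia.
  have := size_deriv d; rewrite d'_eq size_mul // size_W.
  by move: d_r; rewrite /inP; move: (size psi) (size d) => s1 s2; lia.
rewrite km1_b absz_nat -[RHS](J3 phi); last by rewrite (maxn_idPr k_gt0) in phi_r.
rewrite /Jform eqn0Ngt k_gt0 !mul0r addr0.
by apply: (congr1 Iint); apply/funext => t; rewrite d'_eq hornerM horner_weight /a; ring.
Qed.

Lemma Jhom_eq0 d : inP r%:Z d -> Jhom d -> d = 0.
Proof.
move=> d_r Jd.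
have d'0 : d^`() = 0.
  by have [k0|k_gt0] := posnP k; [apply: Jhom_deriv_eq0_k0 | apply: Jhom_deriv_eq0_gt0].
have d_eq : d = (d`_0)%:P.
  apply: size1_polyC; have := size_deriv d; rewrite d'0 size_poly0.
  by move: (size d) => s; lia.
have d_1 : d.[-1] = 0.
  case: Jd => [J1 [_ J3]].
  have [k0|k_gt0] := posnP k; last by rewrite -[d]derivn0; apply: J1; rewrite /fl_km1_2; lia.
  have I0 : Iint (fun t => (0 : {poly R}).[t] * (1 : {poly R}).[t]) = 0.
    apply: Iint_eq0 => [|t]; first exact: CkM (Ck_horner kI 0) (Ck_horner kI 1).
    by rewrite horner0 mul0r.
  have := J3 1; rewrite /Jform d'0 k0 I0 add0r hornerC mulr1 mul1r; apply.
  by rewrite /inP size_poly1; lia.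
rewrite d_eq -polyC0; congr _%:P.
by transitivity d.[-1]; rewrite // {2}d_eq hornerC.
Qed.

Lemma Jconds_unique a1 a2 F q1 q2 : inP r%:Z q1 -> inP r%:Z q2 ->
  Jconds r k Iint a1 a2 F q1 -> Jconds r k Iint a1 a2 F q2 -> q1 = q2.
Proof.
move=> q1_r q2_r Jq1 Jq2; apply/eqP; rewrite -subr_eq0; apply/eqP.
exact: Jhom_eq0 (inPB q1_r q2_r) (Jconds_sub Jq1 Jq2).
Qed.

Local Notation Jlhs q := (Jsel k (fun i => (q^`(i)).[-1]) (fun i => (q^`(i)).[1])
  (Jform k Iint q)).

Lemma Jconds_of_Jsel a1 a2 F q : scalar F ->
  (forall m, (m < r.+1)%N -> Jlhs q m = Jsel k a1 a2 F m) -> Jconds r k Iint a1 a2 F q.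
Proof.
move=> F_scalar Jq; split; [|split].
- move=> k_ge1 i i_le; rewrite /fl_km1_2 in i_le.
  have lt_i : (i < k.+1 %/ 2)%N by lia.
  by have := Jq i; rewrite /Jsel lt_i; apply; lia.
- move=> k_ge2 i i_ge1 i_le; rewrite /fl_k2 in i_le.
  set m := (k.+1 %/ 2 + i.-1)%N.
  have [ge_m lt_m] : (m < k.+1 %/ 2)%N = false /\ (m < k)%N by rewrite /m; lia.
  have m_i : (m - k.+1 %/ 2).+1 = i by rewrite /m; lia.
  by have := Jq m; rewrite /Jsel ge_m lt_m m_i; apply; lia.
- move=> phi phi_r.
  apply: (scalar_eq_on_monomials (Jform_scalar q) F_scalar (n := (r - k).+1)).
    move=> j lt_j.
    have [ge_kj ge_kj'] : (k + j < k.+1 %/ 2)%N = false /\ (k + j < k)%N = false by lia.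
    by have := Jq (k + j)%N; rewrite /Jsel ge_kj ge_kj' addKn; apply; lia.
  by move: phi_r; rewrite /inP; move: (size phi) => s; lia.
Qed.

Lemma Jconds_solvable a1 a2 F : scalar F ->
  exists2 q : {poly R}, inP r%:Z q & Jconds r k Iint a1 a2 F q.
Proof.
move=> F_scalar.
have Jlhs_scalar m : scalar (fun q => Jlhs q m).
  move=> a u v; rewrite /Jsel.
  case: (m < k.+1 %/ 2)%N; last case: (m < k)%N; last exact: Jform_scalar_l.
    by rewrite derivnD derivnZ hornerD hornerZ.
  by rewrite derivnD derivnZ hornerD hornerZ.
have Jlhs_inj (q : {poly R}) : (size q <= r.+1)%N ->
    (forall m, (m < r.+1)%N -> Jlhs q m = 0) -> q = 0.
  move=> size_q Jq0; apply: Jhom_eq0.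
    by rewrite /inP; move: (size q) size_q => s; lia.
  apply: Jconds_of_Jsel => [a u v|m lt_m]; first by rewrite mulr0 addr0.
  by rewrite Jq0 // /Jsel; case: ifP => // _; case: ifP.
have [q size_q Jq] := scalar_system_solvable Jlhs_scalar Jlhs_inj (Jsel k a1 a2 F).
exists q; first by rewrite /inP; move: (size q) size_q => s; lia.
exact: Jconds_of_Jsel.
Qed.

End Jsystem.

Lemma IsJ_poly (R : realType) r k kI (Iint : (R -> R) -> R)
    (Iop : (R -> R) -> (R -> R)) rt (p : {poly R}) :
  integrator_ok kI Iint ->
  (forall p : {poly R}, inP rt%:Z p ->
     forall x : R, onI x -> Iop (fun t => p.[t]) x = p.[x]) ->
  inP (minn rt.+1 r)%:Z p -> IsJ r k Iint Iop (fun t => p.[t]) p.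
Proof.
move=> Iint_ok Iop_exact p_r; split; [|split; [|split]].
- by move: p_r; rewrite /inP; move: (size p) => s; lia.
- by move=> _ i _; rewrite derive1n_horner.
- by move=> _ i _ _; rewrite derive1n_horner.
move=> phi _; congr (_ + _); apply: Iint_ok.2 => x x_I.
rewrite -[fun t => p.[t]]/(horner p) -derivE Iop_exact //.
by move: p_r; rewrite /inP size_deriv; move: (size p) => s; lia.
Qed.

Theorem mainTheorem1 (R : realType) (r k kI kcI : nat)
    (Iint : (R -> R) -> R) (Iop : (R -> R) -> (R -> R)) :
  (k <= r)%N ->
  integrator_ok kI Iint ->
  approx_ok kcI Iop ->
  A1 r k Iint ->
  (forall v : R -> R, Ck (kJ k kI kcI).+1 v ->
     exists! q : {poly R}, IsJ r k Iint Iop v q)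
  /\
  (forall rt : nat,
     (forall p : {poly R}, inP rt%:Z p ->
        forall x : R, onI x -> Iop (fun t => p.[t]) x = p.[x]) ->
     forall p : {poly R}, inP (minn rt.+1 r)%:Z p ->
       forall q : {poly R}, IsJ r k Iint Iop (fun t => p.[t]) q -> q = p).
Proof.
move=> le_kr Iint_ok Iop_ok A1rk; split.
- move=> v /CkS[_ Cv'].
  have CIop : Ck kI (Iop (derive1 v)).
    by apply: Iop_ok.2.2; apply: Ck_le Cv'; rewrite /kJ; lia.
  have [q q_r Jq] := Jconds_solvable le_kr Iint_ok A1rk
    (fun i => derive1n i v (-1)) (fun i => derive1n i v 1)
    (Iint_tested_scalar Iint_ok ((k == 0%N)%:R * v (-1)) CIop).
  exists q; split=> [|q' [q'_r Jq']]; first by split.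
  by apply: (Jconds_unique le_kr Iint_ok A1rk q_r q'_r Jq); exact: Jq'.
- move=> rt Iop_exact p p_r q [q_r Jq].
  have [p_r' Jp] := IsJ_poly k Iint_ok Iop_exact p_r.
  by apply: (Jconds_unique le_kr Iint_ok A1rk q_r p_r' Jq); exact: Jp.
Qed.
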